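(* Let $q\ge 4$ be a prime power and $\mathcal{K}$ a set of $q(q-2)$ points in $\mathrm{PG}(2,q)$. Then there exists a line $L$ with $|L\cap\mathcal{K}|\notin\{0,q-2,q-1\}$.
   Context: $\mathrm{PG}(2,q)$ is the projective plane of $\mathbb{F}_q^3$; points are $1$-dimensional and lines $2$-dimensional subspaces. *)

From HB Require Import structures.
From mathcomp Require Import all_boot all_order all_algebra all_field.
Set Implicit Arguments. Unset Strict Implicit. Unset Printing Implicit Defensive.
Import GRing.Theory.
Local Open Scope ring_scope.

(* PG(2,F) for a finite field F: points are 1-dimensional and lines are
   2-dimensional subspaces of F^3 = 'rV[F]_3. *)
Definition pg_point (F : fieldType) (U : {vspace 'rV[F]_3}) : bool := \dim U == 1%N.
Definition pg_line (F : fieldType) (L : {vspace 'rV[F]_3}) : bool := \dim L == 2%N.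

(* number of points of the (duplicate-free) list K lying on L, i.e. |L ∩ K| *)
Definition meet_count (F : fieldType) (L : {vspace 'rV[F]_3})
  (K : seq {vspace 'rV[F]_3}) : nat := count (fun P => (P <= L)%VS) K.

(* Proof by the standard equations of a point set.  Write t_L = |L ∩ K| and
   n = |K|.  Every point is on q+1 lines and two distinct points are on exactly
   one line, so double counting gives
        sum_L t_L = n (q+1)     and     sum_L t_L^2 = n (n + q).
   If every t_L lay in {0, q-2, q-1} we would have t_L^2 = (q-2) t_L + (q-1)[t_L = q-1],
   and summing, with c the number of (q-1)-secants and n = q(q-2), the
   equations force (q-1) c = 2q(q-2); since q(q-2) = (q-1)^2 - 1 this makes
   q-1 divide 2, impossible for q >= 4. *)

From HB Require Import structures.
From mathcomp Require Import all_boot all_order all_algebra all_field.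
From mathcomp Require Import zify.
Import GRing.Theory.
Set Implicit Arguments. Unset Strict Implicit. Unset Printing Implicit Defensive.

Lemma count_sum_ind (T : Type) (a : pred T) (s : seq T) :
  count a s = \sum_(x <- s) (a x : nat).
Proof. by elim: s => [|x s IH]; rewrite ?big_nil ?big_cons //= IH. Qed.

Lemma double_count (S T : Type) (r : S -> T -> bool) (s : seq S) (t : seq T) :
  \sum_(x <- s) count (r x) t = \sum_(y <- t) count (r^~ y) s.
Proof.
rewrite (eq_bigr _ (fun x _ => count_sum_ind (r x) t)) exchange_big /=.
by apply: eq_bigr => y _; rewrite count_sum_ind.
Qed.

Lemma sum_nat_const_seq (T : Type) (s : seq T) (c : nat) :
  \sum_(x <- s) c = size s * c.
Proof. by rewrite big_const_seq count_predT iter_addn_0 mulnC. Qed.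

Lemma count_andl (T : Type) (b : bool) (a : pred T) (s : seq T) :
  count (fun x => b && a x) s = b * count a s.
Proof. by case: b; rewrite ?mul1n ?mul0n // count_pred0. Qed.

Lemma count_eq_uniq (T : eqType) (s : seq T) (x : T) :
  uniq s -> x \in s -> count (pred1 x) s = 1.
Proof. by move=> us xs; rewrite (count_uniq_mem x us) xs. Qed.

Section ProjectivePlane.

Variable F : finFieldType.
Local Notation V := 'rV[F]_3.
Local Notation q := #|F|.

Lemma q_gt1 : 1 < q. Proof. exact: finNzRing_gt1. Qed.

Lemma mulpredn_inj (m n : nat) : q.-1 * m = q.-1 * n -> m = n.
Proof. by move/eqP; rewrite eqn_pmul2l => [/eqP|]; last by have := q_gt1; lia. Qed.

Lemma vline_point (v : V) : v != 0%R -> pg_point <[v]>%VS.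
Proof. by rewrite /pg_point dim_vline => ->. Qed.

Lemma vline_eq_point (P : {vspace V}) (v : V) :
  pg_point P -> (<[v]>%VS == P) = (v \in P) && (v != 0%R).
Proof.
move=> P1; have [->|nz] := eqVneq v 0%R.
  rewrite andbF; apply/negbTE; apply: contraTneq P1 => <-.
  by rewrite /pg_point ?dimv0 ?dim_vline.
by rewrite /= andbT eqEdim -memvE dim_vline nz (eqP P1) leqnn andbT.
Qed.

Lemma point_nonzero_vector (P : {vspace V}) : pg_point P -> exists2 v, v \in P & v != 0%R.
Proof.
move=> /eqP P1; exists (vpick P); first exact: memv_pick.
by rewrite vpick0; apply: contra_eq_neq P1 => ->; rewrite dimv0.
Qed.

Lemma card_nonzero_vectors (U : {vspace V}) :
  #|[pred v : V | (v \in U) && (v != 0%R)]| = (q ^ \dim U).-1.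
Proof.
rewrite -card_vspace [in RHS](cardD1 0%R) mem0v add1n /=.
by apply: eq_card => v; rewrite !inE andbC.
Qed.

Definition points : seq {vspace V} :=
  undup [seq <[v]>%VS | v <- enum V & v != 0%R].

Lemma uniq_points : uniq points. Proof. exact: undup_uniq. Qed.

Lemma mem_points (P : {vspace V}) : (P \in points) = pg_point P.
Proof.
rewrite mem_undup; apply/mapP/idP => [[v] | P1].
  by rewrite mem_filter => /andP [nz _] ->; exact: vline_point.
have [v vP nz] := point_nonzero_vector P1.
by exists v; [rewrite mem_filter nz mem_enum | apply/esym/eqP; rewrite vline_eq_point ?vP].
Qed.

Lemma count_points_of_vector (U : {vspace V}) (v : V) :
  count (fun P => (P <= U)%VS && (v \in P) && (v != 0%R)) points = (v \in U) && (v != 0%R).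
Proof.
rewrite -(eq_in_count (a1 := fun P => (v \in U) && (v != 0%R) && (P == <[v]>%VS))).
  rewrite count_andl; case: (boolP (_ && _)) => //= /andP [_ nz].
  by rewrite count_eq_uniq ?uniq_points ?mem_points ?vline_point.
move=> P; rewrite mem_points => P1 /=.
rewrite -[in RHS]andbA -(vline_eq_point v P1) [<[v]>%VS == P]eq_sym.
have [eP|] := eqVneq P <[v]>%VS; rewrite ?andbF // !andbT.
by move: P1; rewrite eP -memvE /pg_point dim_vline andbC; case: (v != 0%R).
Qed.

(* Each point has q - 1 nonzero vectors, hence (q-1) |{P <= U}| = q^dim U - 1. *)
Lemma count_points_in (U : {vspace V}) :
  q.-1 * count (fun P => (P <= U)%VS) points = (q ^ \dim U).-1.
Proof.
rewrite -card_nonzero_vectors -[in RHS]sum1_card [in RHS]sum1_count.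
have -> : count (mem [pred v | (v \in U) && (v != 0%R)]) (index_enum V) =
  \sum_(v <- index_enum V) count (fun P => (P <= U)%VS && (v \in P) && (v != 0%R)) points.
  by rewrite count_sum_ind; apply: eq_bigr => v _; rewrite count_points_of_vector.
rewrite (double_count (fun v P => (P <= U)%VS && (v \in P) && (v != 0%R))).
rewrite count_sum_ind big_distrr /=; apply: eq_big_seq => P; rewrite mem_points => P1.
rewrite (eq_count (a2 := fun v => (P <= U)%VS && ((v \in P) && (v != 0%R)))) => [|v]; last first.
  by rewrite andbA.
have := card_nonzero_vectors P; rewrite -[in LHS]sum1_card [in LHS]sum1_count (eqP P1) expn1.
by rewrite count_andl mulnC => ->.
Qed.

Lemma size_points : size points = (q * q + q).+1.
Proof.
apply: mulpredn_inj; have := count_points_in fullv.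
rewrite dimvf dim_matrix (eq_count (a2 := predT)) => [|P]; last exact: subvf.
rewrite count_predT => ->; have := q_gt1; rewrite !expnS expn0 muln1; nia.
Qed.

Lemma count_points_on_line (L : {vspace V}) :
  pg_line L -> count (fun P => (P <= L)%VS) points = q.+1.
Proof.
move=> /eqP L2; apply: mulpredn_inj; rewrite count_points_in L2.
have := q_gt1; rewrite !expnS expn0 muln1; nia.
Qed.

Lemma dim_join_points (P R : {vspace V}) :
  pg_point P -> pg_point R -> P != R -> \dim (P + R) = 2.
Proof.
move=> /eqP P1 /eqP R1 PR; have := dimv_sum_cap P R; rewrite P1 R1.
suff : \dim (P :&: R) != 1 by have := dimvS (capvSl P R); rewrite P1; lia.
apply: contra PR => /eqP d1.
have eP : (P :&: R)%VS = P by apply/eqP; rewrite eqEdim capvSl P1 d1.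
have eR : (P :&: R)%VS = R by apply/eqP; rewrite eqEdim capvSr R1 d1.
by rewrite -eP eR.
Qed.

Lemma join_points_line (L P R : {vspace V}) :
  pg_line L -> pg_point P -> pg_point R -> P != R ->
  (P <= L)%VS -> (R <= L)%VS -> (P + R)%VS = L.
Proof.
move=> /eqP L2 P1 R1 PR PL RL; apply/eqP.
by rewrite eqEdim subv_add PL RL (dim_join_points P1 R1 PR) L2.
Qed.

(* Since a line has q + 1 >= 2 points, it is the join of two of them. *)
Lemma line_two_points (L : {vspace V}) : pg_line L -> exists P R,
  [/\ pg_point P, pg_point R, P != R, (P <= L)%VS & (R <= L)%VS].
Proof.
move=> L2; have := count_points_on_line L2; rewrite -size_filter.
have := filter_uniq (fun P => (P <= L)%VS) uniq_points.
have onL P : P \in [seq P <- points | (P <= L)%VS] -> pg_point P && (P <= L)%VS.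
  by rewrite mem_filter mem_points andbC.
case: [seq _ <- _ | _] onL => [|P [|R s]] onL //= => [_ [q0] | /and3P [PRs _ _] _].
  by have := q_gt1; rewrite -q0.
move: PRs; rewrite in_cons negb_or => /andP [PR _].
have /andP [P1 PL] := onL P (mem_head _ _).
have /andP [R1 RL] : pg_point R && (R <= L)%VS by apply: onL; rewrite !inE eqxx orbT.
by exists P, R.
Qed.

Definition lines : seq {vspace V} :=
  undup [seq L <- [seq (P + R)%VS | P <- points, R <- points] | pg_line L].

Lemma uniq_lines : uniq lines. Proof. exact: undup_uniq. Qed.

Lemma mem_lines (L : {vspace V}) : (L \in lines) = pg_line L.
Proof.
rewrite mem_undup mem_filter; apply/andP/idP => [[] // | L2]; split => //.
have [P [R [P1 R1 PR PL RL]]] := line_two_points L2.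
by rewrite -(join_points_line L2 P1 R1 PR PL RL); apply: allpairs_f; rewrite mem_points.
Qed.

Lemma count_lines_through2 (P R : {vspace V}) :
  pg_point P -> pg_point R -> P != R ->
  count (fun L => (P <= L)%VS && (R <= L)%VS) lines = 1.
Proof.
move=> P1 R1 PR; transitivity (count (fun L => L == (P + R)%VS) lines).
  apply: eq_in_count => L; rewrite mem_lines => L2 /=.
  apply/andP/eqP => [[PL RL] | ->]; last by rewrite addvSl addvSr.
  by rewrite (join_points_line L2 P1 R1 PR PL RL).
by rewrite count_eq_uniq ?uniq_lines // mem_lines /pg_line dim_join_points.
Qed.

Lemma count_points_on_line_other (L P : {vspace V}) :
  pg_line L -> pg_point P -> (P <= L)%VS ->
  count (fun R => (R <= L)%VS && (R != P)) points = q.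
Proof.
move=> L2 P1 PL; have := count_points_on_line L2.
rewrite -size_filter -(count_predC (pred1 P)).
rewrite (count_eq_uniq (filter_uniq _ uniq_points)); last by rewrite mem_filter PL mem_points.
rewrite count_filter (eq_count (a2 := fun R => (R <= L)%VS && (R != P))) => [[] //|R].
by rewrite /= andbC.
Qed.

(* Through a point pass q + 1 lines: count the pairs (R, L) with R != P on L through P. *)
Lemma count_lines_through (P : {vspace V}) :
  pg_point P -> count (fun L => (P <= L)%VS) lines = q.+1.
Proof.
move=> P1; have q_gt0 : 0 < q by have := q_gt1; lia.
apply/eqP; rewrite -(eqn_pmul2l q_gt0); apply/eqP.
have -> : q * count (fun L => (P <= L)%VS) lines =
    \sum_(L <- lines) count (fun R => (P <= L)%VS && (R <= L)%VS && (R != P)) points.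
  rewrite count_sum_ind big_distrr /=; apply: eq_big_seq => L; rewrite mem_lines => L2.
  under eq_count do rewrite -andbA.
  case: (boolP (P <= L)%VS) => PL; rewrite count_andl ?mul0n ?muln0 //.
  by rewrite mul1n muln1 count_points_on_line_other.
rewrite (double_count (fun L R => (P <= L)%VS && (R <= L)%VS && (R != P))).
have -> : \sum_(R <- points) count (fun L => (P <= L)%VS && (R <= L)%VS && (R != P)) lines =
          count (predC (pred1 P)) points.
  rewrite count_sum_ind; apply: eq_big_seq => R; rewrite mem_points => R1.
  under eq_count do rewrite andbC.
  have [->|RP] := eqVneq R P; rewrite count_andl /= ?eqxx ?mul0n //.
  by rewrite RP mul1n count_lines_through2 // eq_sym.
have := count_predC (pred1 P) points.
rewrite (count_eq_uniq uniq_points) ?mem_points // size_points mulnS; lia.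
Qed.

Section StandardEquations.

Variable K : seq {vspace V}.
Hypothesis pointsK : all (@pg_point F) K.

(* Counting incident pairs (P, L), P in K: each point lies on q + 1 lines. *)
Lemma sum_meet_count : \sum_(L <- lines) meet_count L K = size K * q.+1.
Proof.
rewrite (double_count (fun L P => (P <= L)%VS)) -sum_nat_const_seq.
by apply: eq_big_seq => P PK; rewrite count_lines_through ?(allP pointsK).
Qed.

(* The second equation needs the points of K to be distinct. *)
Hypothesis uniqK : uniq K.

(* Counting triples (P, R, L), P, R in K on L: distinct points share exactly one
   line, while P = R gives the q + 1 lines through P. *)
Lemma sum_meet_count_sqr :
  \sum_(L <- lines) meet_count L K * meet_count L K = size K * (size K + q).
Proof.
have sqr_as_pairs L : meet_count L K * meet_count L K =
    \sum_(P <- K) count (fun R => (P <= L)%VS && (R <= L)%VS) K.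
  rewrite {1}/meet_count count_sum_ind big_distrl /=.
  by apply: eq_bigr => P _; rewrite count_andl.
rewrite (eq_bigr _ (fun L _ => sqr_as_pairs L)) exchange_big /= -sum_nat_const_seq.
apply: eq_big_seq => P PK; have P1 := allP pointsK P PK.
rewrite (double_count (fun L R => (P <= L)%VS && (R <= L)%VS)).
transitivity (\sum_(R <- K) (1 + q * (R == P))).
  apply: eq_big_seq => R RK; have [->|RP] := eqVneq R P.
    by under eq_count do rewrite andbb; rewrite /= muln1 add1n count_lines_through.
  by rewrite /= muln0 addn0 count_lines_through2 ?(allP pointsK) // eq_sym.
rewrite big_split /= sum_nat_const_seq muln1 -big_distrr /=.
by rewrite -(count_sum_ind (pred1 P)) count_eq_uniq // muln1.
Qed.

End StandardEquations.

End ProjectivePlane.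

Lemma sqr_allowed_type (q t : nat) :
  2 < q -> t \in [:: 0; q - 2; q - 1] -> t * t = (q - 2) * t + (q - 1) * (t == q - 1).
Proof. by move=> q_gt2; rewrite !inE => /or3P [] /eqP ->; case: eqP; nia. Qed.

(* The standard equations with n = q(q-2) and c lines of type q - 1 give
   (q-1) c = 2q(q-2) = 2(q-1)^2 - 2, so q - 1 divides 2: impossible for q >= 4. *)
Lemma standard_equations_infeasible (q c : nat) : 4 <= q ->
  q * (q - 2) * (q * (q - 2) + q) = (q - 2) * (q * (q - 2) * q.+1) + (q - 1) * c -> False.
Proof.
move=> q_ge4; have [y ->] : exists y, q = y.+4 by exists (q - 4); lia.
rewrite !subSS !subn0 => e.
have {}e : (y + 3) * c = 2 * (y + 3) * (y + 3) - 2 by nia.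
have [c_small|c_big] := leqP c (2 * y + 5); nia.
Qed.

Theorem mainTheorem15 (F : finFieldType) (K : seq {vspace 'rV[F]_3}) :
  4 <= #|F| ->
  uniq K ->
  all (@pg_point F) K ->
  size K = #|F| * (#|F| - 2) ->
  exists L : {vspace 'rV[F]_3},
    pg_line L /\ meet_count L K \notin [:: 0; #|F| - 2; #|F| - 1].
Proof.
move=> q_ge4 uniqK pointsK sizeK.
set types := [:: 0; #|F| - 2; #|F| - 1].
have [/hasP [L] | /hasPn allowed] := boolP (has (fun L => meet_count L K \notin types) (lines F)).
  by rewrite mem_lines => L2 tL; exists L.
pose c := count (fun L => meet_count L K == #|F| - 1) (lines F).
exfalso; apply: (@standard_equations_infeasible #|F| c q_ge4).
rewrite -sizeK -(sum_meet_count pointsK) -(sum_meet_count_sqr pointsK uniqK) /c count_sum_ind.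
rewrite !big_distrr -big_split /=; apply: eq_big_seq => L /allowed.
by rewrite negbK; apply: sqr_allowed_type; lia.
Qed.
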